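(* Let $a,b\in(0,1]$ and $F(x)=F(a,b;a+b;x)$ for $|x|<1$. Then $1/F(x)$ is concave on $(0,1)$. In particular, $$F\Big(\frac{x+y}{2}\Big)\le\frac{2F(x)F(y)}{F(x)+F(y)}$$ for all $x,y\in(0,1)$, with equality if and only if $x=y$.
   Context: $F(a,b;c;x)=\sum_{n=0}^\infty\frac{(a,n)(b,n)}{(c,n)\,n!}x^n$ for $|x|<1$ is the Gaussian hypergeometric function, where $(a,0)=1$ and $(a,n)=a(a+1)\cdots(a+n-1)$ for $n\ge1$. *)

From Stdlib Require Import Reals.
From Coquelicot Require Import Coquelicot.
Open Scope R_scope.

Fixpoint poch (a : R) (n : nat) : R :=
  match n with
  | O => 1
  | S k => poch a k * (a + INR k)
  end.

(* Gaussian hypergeometric function F(a,b;c;x) = sum_n (a,n)(b,n)/((c,n) n!) x^n,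
   meaningful for |x| < 1 (there the series converges when c is not a
   non-positive integer). *)
Definition hypergeom (a b c x : R) : R :=
  Series (fun n => poch a n * poch b n / (poch c n * INR (Factorial.fact n)) * x ^ n).

Definition concave_on (f : R -> R) (l u : R) : Prop :=
  forall x y t, l < x < u -> l < y < u -> 0 <= t <= 1 ->
    t * f x + (1 - t) * f y <= f (t * x + (1 - t) * y).

From Stdlib Require Import Reals Lra Lia Psatz.
From Coquelicot Require Import Coquelicot.
Open Scope R_scope.

(* The coefficients c_n of F(a,b;a+b;x) satisfy c_0 = 1 and
   c_(n+1) / c_n = (a+n)(b+n) / ((a+b+n)(n+1)), a ratio that increases strictly
   in n and stays <= 1 when a, b <= 1; so (c_n) is log-convex.  By Kaluza's
   theorem the reciprocal of a power series with log-convex coefficients and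
   c_0 = 1 has the form 1 - sum_n b_n x^n with every b_n >= 0.  Hence 1/F is
   1 minus a power series with nonnegative coefficients, which is concave on
   [0,1).  Since b_2 = c_2 - c_1^2 > 0, midpoint concavity is strict off the
   diagonal, and midpoint concavity of 1/F is exactly the harmonic-mean
   inequality for F. *)

Lemma pow_convex_comb (x y t : R) (n : nat) : 0 <= x -> 0 <= y -> 0 <= t <= 1 ->
  (t * x + (1 - t) * y) ^ n <= t * x ^ n + (1 - t) * y ^ n.
Proof.
  intros Hx Hy Ht. induction n as [|n IH]; simpl; [lra|].
  set (z := t * x + (1 - t) * y) in *.
  assert (Hz : 0 <= z) by (unfold z; nra).
  assert (Hsame : 0 <= (x - y) * (x ^ n - y ^ n)).
  { destruct (Rle_dec x y).
    - pose proof (pow_incr x y n ltac:(lra)). nra.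
    - pose proof (pow_incr y x n ltac:(lra)). nra. }
  assert (Hgap : z * (t * x ^ n + (1 - t) * y ^ n) - (t * (x * x ^ n) + (1 - t) * (y * y ^ n))
                 = - t * (1 - t) * ((x - y) * (x ^ n - y ^ n))) by (unfold z; ring).
  assert (z * z ^ n <= z * (t * x ^ n + (1 - t) * y ^ n)) by (apply Rmult_le_compat_l; auto).
  assert (0 <= t * (1 - t)) by nra. nra.
Qed.

Lemma convex_comb_in_unit (x y t : R) : 0 <= x < 1 -> 0 <= y < 1 -> 0 <= t <= 1 ->
  0 <= t * x + (1 - t) * y < 1.
Proof. intros Hx Hy Ht. destruct (Rle_dec x y); split; nra. Qed.

Lemma sum_f_R0_nonneg (u : nat -> R) (N : nat) :
  (forall n, (n <= N)%nat -> 0 <= u n) -> 0 <= sum_f_R0 u N.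
Proof.
  intros Hu. rewrite <- (Rmult_0_l (INR (S N))), <- sum_cte. now apply sum_Rle.
Qed.

Lemma Series_nonneg (u : nat -> R) : (forall n, 0 <= u n) -> ex_series u -> 0 <= Series u.
Proof.
  intros Hu Hex. rewrite <- (Rmult_0_l (Series u)), <- Series_scal_l.
  apply Series_le; [intro n; rewrite Rmult_0_l; split; [lra | auto] | exact Hex].
Qed.

Lemma Series_ge_term (u : nat -> R) (k : nat) :
  (forall n, 0 <= u n) -> ex_series u -> u k <= Series u.
Proof.
  intros Hu Hex. rewrite (Series_incr_n u (S k)) by (lia || exact Hex). simpl pred.
  assert (0 <= Series (fun n => u (S k + n)%nat)).
  { apply Series_nonneg; [auto | now apply (ex_series_incr_n u (S k))]. }
  destruct k as [|k]; simpl sum_f_R0; [lra|].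
  pose proof (cond_pos_sum u k Hu). lra.
Qed.

Lemma CV_radius_ge_1 (u : nat -> R) : (forall n, Rabs (u n) <= 1) -> Rbar_le 1 (CV_radius u).
Proof.
  intros Hu. apply (proj1 (CV_radius_bounded u)).
  exists 1. intro n. now rewrite pow1, Rmult_1_r.
Qed.

Lemma Rabs_lt_CV_radius (u : nat -> R) (x : R) :
  (forall n, Rabs (u n) <= 1) -> Rabs x < 1 -> Rbar_lt (Rabs x) (CV_radius u).
Proof.
  intros Hu Hx. apply (Rbar_lt_le_trans _ 1); [exact Hx | now apply CV_radius_ge_1].
Qed.

Lemma harmonic_mean_inv (p q : R) : 0 < p -> 0 < q ->
  2 * p * q / (p + q) = / ((/ p + / q) / 2).
Proof. intros Hp Hq. field. repeat split; lra. Qed.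

Lemma le_harmonic_mean_iff (p q r : R) : 0 < p -> 0 < q -> 0 < r ->
  r <= 2 * p * q / (p + q) <-> (/ p + / q) / 2 <= / r.
Proof.
  intros Hp Hq Hr. rewrite harmonic_mean_inv by assumption.
  assert (Hmean : 0 < (/ p + / q) / 2).
  { pose proof (Rinv_0_lt_compat p Hp). pose proof (Rinv_0_lt_compat q Hq). lra. }
  split; intro H.
  - rewrite <- (Rinv_inv ((/ p + / q) / 2)). now apply Rinv_le_contravar.
  - rewrite <- (Rinv_inv r). now apply Rinv_le_contravar.
Qed.

Lemma eq_harmonic_mean_iff (p q r : R) : 0 < p -> 0 < q ->
  r = 2 * p * q / (p + q) <-> / r = (/ p + / q) / 2.
Proof.
  intros Hp Hq. rewrite harmonic_mean_inv by assumption.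
  split; intro H.
  - now rewrite H, Rinv_inv.
  - now rewrite <- H, Rinv_inv.
Qed.

Section NonnegPowerSeries.

Variable d : nat -> R.
Hypothesis d_nonneg : forall n, 0 <= d n.
Hypothesis d_le_1 : forall n, d n <= 1.

Lemma ex_series_nonneg_coef (x : R) : 0 <= x < 1 -> ex_series (fun n => d n * x ^ n).
Proof.
  intros Hx. apply ex_series_Rabs, CV_disk_inside, Rabs_lt_CV_radius.
  - intro n. rewrite Rabs_pos_eq; auto.
  - rewrite Rabs_pos_eq; lra.
Qed.

Lemma PSeries_ge_coef_0 (x : R) : 0 <= x < 1 -> d 0 <= PSeries d x.
Proof.
  intros Hx. rewrite <- (Rmult_1_r (d 0%nat)), <- (pow_O x).
  apply (Series_ge_term (fun n => d n * x ^ n)); [|now apply ex_series_nonneg_coef].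
  intro n. apply Rmult_le_pos; [auto | apply pow_le; lra].
Qed.

Lemma PSeries_convex (x y t : R) : 0 <= x < 1 -> 0 <= y < 1 -> 0 <= t <= 1 ->
  PSeries d (t * x + (1 - t) * y) <= t * PSeries d x + (1 - t) * PSeries d y.
Proof.
  intros Hx Hy Ht. pose proof (convex_comb_in_unit x y t Hx Hy Ht) as Hz.
  pose proof (ex_series_nonneg_coef x Hx) as Ex. pose proof (ex_series_nonneg_coef y Hy) as Ey.
  unfold PSeries. rewrite <- !Series_scal_l, <- Series_plus.
  - apply Series_le.
    + intro n. pose proof (d_nonneg n). pose proof (pow_le _ n (proj1 Hz)).
      pose proof (pow_convex_comb x y t n ltac:(lra) ltac:(lra) Ht). nra.
    + apply (@ex_series_plus R_AbsRing R_NormedModule);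
      now apply (@ex_series_scal_l R_AbsRing R_NormedModule).
  - now apply (@ex_series_scal_l R_AbsRing R_NormedModule).
  - now apply (@ex_series_scal_l R_AbsRing R_NormedModule).
Qed.

Lemma PSeries_midpoint_strict (x y : R) : 0 < d 2 -> 0 <= x < 1 -> 0 <= y < 1 -> x <> y ->
  PSeries d ((x + y) / 2) < (PSeries d x + PSeries d y) / 2.
Proof.
  intros Hd2 Hx Hy Hxy. set (m := (x + y) / 2). assert (Hm : 0 <= m < 1) by (unfold m; lra).
  pose proof (ex_series_nonneg_coef x Hx) as Ex. pose proof (ex_series_nonneg_coef y Hy) as Ey.
  pose proof (ex_series_nonneg_coef m Hm) as Em.
  set (gap := fun n => / 2 * (d n * x ^ n + d n * y ^ n) - d n * m ^ n).
  assert (Hgap : forall n, 0 <= gap n).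
  { intro n. pose proof (pow_convex_comb x y (/ 2) n ltac:(lra) ltac:(lra) ltac:(lra)) as H.
    replace (/ 2 * x + (1 - / 2) * y) with m in H by (unfold m; field).
    pose proof (d_nonneg n). unfold gap. nra. }
  assert (Egap : ex_series gap).
  { apply (@ex_series_minus R_AbsRing R_NormedModule); [|exact Em].
    apply (@ex_series_scal_l R_AbsRing R_NormedModule).
    now apply (@ex_series_plus R_AbsRing R_NormedModule). }
  assert (Hsum : Series gap = (PSeries d x + PSeries d y) / 2 - PSeries d m).
  { unfold gap, PSeries. rewrite Series_minus, Series_scal_l, Series_plus; auto; [lra|].
    apply (@ex_series_scal_l R_AbsRing R_NormedModule).
    now apply (@ex_series_plus R_AbsRing R_NormedModule). }
  assert (Hgap2 : 0 < gap 2%nat).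
  { assert (0 < (x - y) * (x - y)) by (apply Rsqr_pos_lt; lra).
    unfold gap, m. simpl. nra. }
  pose proof (Series_ge_term gap 2 Hgap Egap). lra.
Qed.

End NonnegPowerSeries.

Section Kaluza.

Variable c : nat -> R.
Hypothesis c_0 : c 0 = 1.
Hypothesis c_pos : forall n, 0 < c n.
Hypothesis c_le_1 : forall n, c n <= 1.
Hypothesis c_log_convex : forall n, c (S n) / c n <= c (S (S n)) / c (S n).

(* [kaluza_table n] lists [b 0, ..., b n] for the sequence defined by [b 0 = 0] and
   [b n = c n - sum_(k < n) b k * c (n - k)], so that [1 - sum b n x^n] is the
   reciprocal of [sum c n x^n]. *)
Fixpoint kaluza_table (n : nat) : nat -> R :=
  match n with
  | O => fun _ => 0
  | S m => fun k =>
      if Nat.leb k m then kaluza_table m k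
      else c (S m) - sum_f_R0 (fun j => kaluza_table m j * c (S m - j)) m
  end.

Definition kaluza_coef (n : nat) : R := kaluza_table n n.

Lemma kaluza_table_stable (n k : nat) : (k <= n)%nat -> kaluza_table n k = kaluza_coef k.
Proof.
  induction n as [|n IH]; intros Hk.
  - now replace k with 0%nat by lia.
  - destruct (Nat.eq_dec k (S n)) as [->|Hne]; [reflexivity|].
    simpl. replace (Nat.leb k n) with true by (symmetry; apply Nat.leb_le; lia).
    apply IH; lia.
Qed.

Lemma kaluza_coef_S (n : nat) :
  kaluza_coef (S n) = c (S n) - sum_f_R0 (fun k => kaluza_coef k * c (S n - k)) n.
Proof.
  unfold kaluza_coef at 1; cbv [kaluza_table]; fold kaluza_table.
  replace (Nat.leb (S n) n) with false by (symmetry; apply Nat.leb_gt; lia).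
  f_equal. apply sum_eq. intros k Hk. now rewrite kaluza_table_stable.
Qed.

Lemma PS_mult_kaluza_coef (n : nat) : PS_mult kaluza_coef c (S n) = c (S n).
Proof.
  unfold PS_mult. rewrite tech5, Nat.sub_diag, c_0, kaluza_coef_S. ring.
Qed.

Lemma log_convex_ratio_le (m n : nat) : (m <= n)%nat -> c (S m) / c m <= c (S n) / c n.
Proof.
  induction 1 as [|n _ IH]; [lra|]. pose proof (c_log_convex n). lra.
Qed.

(* Since [c (n+1) = r n * c n] with [r n = c (n+1) / c n], the defining relation
   at [n+1] minus [r n] times the one at [n] cancels [c (n+1)]. *)
Lemma kaluza_coef_S_ratio (n : nat) : (1 <= n)%nat ->
  kaluza_coef (S n) = sum_f_R0 (fun k => kaluza_coef k * c (n - k) *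
                                   (c (S n) / c n - c (S (n - k)) / c (n - k))) n.
Proof.
  intros Hn. destruct n as [|n]; [lia|].
  set (r := c (S (S n)) / c (S n)).
  pose proof (PS_mult_kaluza_coef n) as Hconv. unfold PS_mult in Hconv.
  rewrite kaluza_coef_S.
  transitivity (r * sum_f_R0 (fun k => kaluza_coef k * c (S n - k)) (S n)
                - sum_f_R0 (fun k => kaluza_coef k * c (S (S n) - k)) (S n)).
  { rewrite Hconv. unfold r. field. apply Rgt_not_eq, c_pos. }
  rewrite scal_sum, <- minus_sum. apply sum_eq. intros k Hk.
  replace (S (S n) - k)%nat with (S (S n - k)) by lia.
  field. apply Rgt_not_eq, c_pos.
Qed.

Lemma kaluza_coef_nonneg (n : nat) : 0 <= kaluza_coef n.
Proof.
  induction n as [n IH] using Wf_nat.lt_wf_ind.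
  destruct n as [|[|n]].
  - unfold kaluza_coef; simpl; lra.
  - rewrite kaluza_coef_S. simpl. unfold kaluza_coef at 1; simpl.
    pose proof (c_pos 1). lra.
  - rewrite kaluza_coef_S_ratio by lia. apply sum_f_R0_nonneg. intros k Hk.
    repeat apply Rmult_le_pos.
    + apply IH; lia.
    + apply Rlt_le, c_pos.
    + pose proof (log_convex_ratio_le (S n - k) (S n) ltac:(lia)). lra.
Qed.

Lemma kaluza_coef_le (n : nat) : kaluza_coef n <= c n.
Proof.
  destruct n as [|n].
  - unfold kaluza_coef; simpl. rewrite c_0; lra.
  - rewrite kaluza_coef_S.
    enough (0 <= sum_f_R0 (fun k => kaluza_coef k * c (S n - k)) n) by lra.
    apply cond_pos_sum. intro k. apply Rmult_le_pos; [apply kaluza_coef_nonneg | apply Rlt_le, c_pos].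
Qed.

Lemma kaluza_coef_2 : kaluza_coef 2 = c 2 - c 1 ^ 2.
Proof.
  rewrite kaluza_coef_S. simpl. rewrite kaluza_coef_S. simpl.
  unfold kaluza_coef; simpl. ring.
Qed.

Lemma kaluza_coef_bounds (n : nat) : 0 <= kaluza_coef n <= 1.
Proof.
  split; [apply kaluza_coef_nonneg|]. apply (Rle_trans _ _ _ (kaluza_coef_le n)), c_le_1.
Qed.

Lemma Rabs_lt_CV_radius_kaluza (x : R) : Rabs x < 1 ->
  Rbar_lt (Rabs x) (CV_radius c) /\ Rbar_lt (Rabs x) (CV_radius kaluza_coef).
Proof.
  intros Hx. split; apply Rabs_lt_CV_radius; auto; intro n.
  - rewrite Rabs_pos_eq; [apply c_le_1 | apply Rlt_le, c_pos].
  - rewrite Rabs_pos_eq; apply kaluza_coef_bounds.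
Qed.

Lemma PSeries_kaluza_coef_inv (x : R) : Rabs x < 1 ->
  / PSeries c x = 1 - PSeries kaluza_coef x.
Proof.
  intros Hx. destruct (Rabs_lt_CV_radius_kaluza x Hx) as [Rc Rb].
  assert (Hprod : PSeries kaluza_coef x * PSeries c x = PSeries c x - 1).
  { rewrite <- PSeries_mult by assumption.
    rewrite (PSeries_decr_1 c), (PSeries_decr_1 (PS_mult _ _));
      [| now apply ex_pseries_mult | now apply CV_radius_inside].
    rewrite (PSeries_ext (PS_decr_1 (PS_mult kaluza_coef c)) (PS_decr_1 c))
      by apply PS_mult_kaluza_coef.
    unfold PS_mult, kaluza_coef; simpl. rewrite c_0. ring. }
  assert (Hinv : PSeries c x * (1 - PSeries kaluza_coef x) = 1) by lra.
  symmetry. apply Rmult_inv_r_uniq; [|exact Hinv].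
  intro H0. rewrite H0, Rmult_0_l in Hinv. lra.
Qed.

Lemma inv_PSeries_concave (x y t : R) : 0 <= x < 1 -> 0 <= y < 1 -> 0 <= t <= 1 ->
  t * / PSeries c x + (1 - t) * / PSeries c y <= / PSeries c (t * x + (1 - t) * y).
Proof.
  intros Hx Hy Ht. pose proof (convex_comb_in_unit x y t Hx Hy Ht) as Hz.
  rewrite !PSeries_kaluza_coef_inv by (rewrite Rabs_pos_eq; lra).
  pose proof (PSeries_convex kaluza_coef (fun n => proj1 (kaluza_coef_bounds n))
                (fun n => proj2 (kaluza_coef_bounds n)) x y t Hx Hy Ht).
  lra.
Qed.

Lemma inv_PSeries_midpoint_strict (x y : R) : c 1 ^ 2 < c 2 ->
  0 <= x < 1 -> 0 <= y < 1 -> x <> y ->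
  (/ PSeries c x + / PSeries c y) / 2 < / PSeries c ((x + y) / 2).
Proof.
  intros Hc12 Hx Hy Hxy.
  rewrite !PSeries_kaluza_coef_inv by (rewrite Rabs_pos_eq; lra).
  pose proof (PSeries_midpoint_strict kaluza_coef (fun n => proj1 (kaluza_coef_bounds n))
                (fun n => proj2 (kaluza_coef_bounds n)) x y) as H.
  rewrite kaluza_coef_2 in H. specialize (H ltac:(lra) Hx Hy Hxy). lra.
Qed.

End Kaluza.

Definition hypergeom_coef (a b c : R) (n : nat) : R :=
  poch a n * poch b n / (poch c n * INR (Factorial.fact n)).

Definition hypergeom_ratio (a b c : R) (n : nat) : R :=
  (a + INR n) * (b + INR n) / ((c + INR n) * (INR n + 1)).

Lemma poch_pos (c : R) (n : nat) : 0 < c -> 0 < poch c n.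
Proof.
  intros Hc. induction n as [|n IH]; simpl; [lra|].
  apply Rmult_lt_0_compat; [exact IH|]. pose proof (pos_INR n). lra.
Qed.

Lemma hypergeom_coef_0 (a b c : R) : hypergeom_coef a b c 0 = 1.
Proof. unfold hypergeom_coef; simpl. field. Qed.

Lemma hypergeom_coef_S (a b c : R) (n : nat) : 0 < c ->
  hypergeom_coef a b c (S n) = hypergeom_coef a b c n * hypergeom_ratio a b c n.
Proof.
  intros Hc. unfold hypergeom_coef, hypergeom_ratio. simpl poch.
  change (Factorial.fact (S n)) with (S n * Factorial.fact n)%nat.
  rewrite mult_INR, S_INR.
  pose proof (poch_pos c n Hc). pose proof (INR_fact_lt_0 n). pose proof (pos_INR n).
  field. repeat split; lra.
Qed.

Lemma hypergeom_ratio_pos (a b c : R) (n : nat) : 0 < a -> 0 < b -> 0 < c ->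
  0 < hypergeom_ratio a b c n.
Proof.
  intros Ha Hb Hc. unfold hypergeom_ratio. pose proof (pos_INR n).
  apply Rdiv_lt_0_compat; apply Rmult_lt_0_compat; lra.
Qed.

Lemma hypergeom_coef_pos (a b c : R) (n : nat) : 0 < a -> 0 < b -> 0 < c ->
  0 < hypergeom_coef a b c n.
Proof.
  intros Ha Hb Hc. induction n as [|n IH]; [rewrite hypergeom_coef_0; lra|].
  rewrite hypergeom_coef_S by exact Hc.
  apply Rmult_lt_0_compat; [exact IH | now apply hypergeom_ratio_pos].
Qed.

Lemma zero_balanced_ratio_le_1 (a b : R) (n : nat) : 0 < a <= 1 -> 0 < b <= 1 ->
  hypergeom_ratio a b (a + b) n <= 1.
Proof.
  intros Ha Hb. unfold hypergeom_ratio. pose proof (pos_INR n).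
  apply Rcomplements.Rle_div_l; [apply Rmult_lt_0_compat; lra | nra].
Qed.

Lemma zero_balanced_ratio_lt (a b : R) (n : nat) : 0 < a <= 1 -> 0 < b <= 1 ->
  hypergeom_ratio a b (a + b) n < hypergeom_ratio a b (a + b) (S n).
Proof.
  intros Ha Hb. pose proof (pos_INR n) as Hn.
  set (m := INR n) in *. set (s := a + b). set (p := a * b).
  assert (Hdiff : hypergeom_ratio a b s (S n) - hypergeom_ratio a b s n =
    ((m + s - p) * (m + s + 1) - p * (m + 1)) / ((m + s) * (m + 1) * (m + 1 + s) * (m + 2))).
  { unfold hypergeom_ratio. rewrite S_INR. fold m. unfold s, p. field. repeat split; lra. }
  enough (0 < hypergeom_ratio a b s (S n) - hypergeom_ratio a b s n) by lra.
  rewrite Hdiff. apply Rdiv_lt_0_compat; [|repeat apply Rmult_lt_0_compat; unfold s; lra].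
  (* [p <= min a b] gives [s - p >= p], so the numerator is at least [p * s > 0]. *)
  assert (p <= a /\ p <= b /\ 0 < p) by (unfold p; repeat split; nra).
  unfold s in *. nra.
Qed.

Lemma hypergeom_coef_ratio (a b c : R) (n : nat) : 0 < a -> 0 < b -> 0 < c ->
  hypergeom_coef a b c (S n) / hypergeom_coef a b c n = hypergeom_ratio a b c n.
Proof.
  intros Ha Hb Hc. rewrite hypergeom_coef_S by exact Hc.
  field. apply Rgt_not_eq, hypergeom_coef_pos; assumption.
Qed.

Lemma zero_balanced_coef_le_1 (a b : R) (n : nat) : 0 < a <= 1 -> 0 < b <= 1 ->
  hypergeom_coef a b (a + b) n <= 1.
Proof.
  intros Ha Hb. induction n as [|n IH]; [rewrite hypergeom_coef_0; lra|].
  rewrite hypergeom_coef_S by lra.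
  pose proof (hypergeom_coef_pos a b (a + b) n ltac:(lra) ltac:(lra) ltac:(lra)).
  pose proof (hypergeom_ratio_pos a b (a + b) n ltac:(lra) ltac:(lra) ltac:(lra)).
  pose proof (zero_balanced_ratio_le_1 a b n Ha Hb). nra.
Qed.

Lemma zero_balanced_coef_log_convex (a b : R) (n : nat) : 0 < a <= 1 -> 0 < b <= 1 ->
  hypergeom_coef a b (a + b) (S n) / hypergeom_coef a b (a + b) n <=
  hypergeom_coef a b (a + b) (S (S n)) / hypergeom_coef a b (a + b) (S n).
Proof.
  intros Ha Hb. rewrite !hypergeom_coef_ratio by lra.
  apply Rlt_le, zero_balanced_ratio_lt; assumption.
Qed.

Lemma zero_balanced_coef_1_sqr_lt (a b : R) : 0 < a <= 1 -> 0 < b <= 1 ->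
  hypergeom_coef a b (a + b) 1 ^ 2 < hypergeom_coef a b (a + b) 2.
Proof.
  intros Ha Hb.
  rewrite !hypergeom_coef_S, hypergeom_coef_0 by lra.
  pose proof (hypergeom_ratio_pos a b (a + b) 0 ltac:(lra) ltac:(lra) ltac:(lra)).
  pose proof (zero_balanced_ratio_lt a b 0 Ha Hb). simpl. nra.
Qed.

Theorem theorem3p5 (a b : R) (ha : 0 < a <= 1) (hb : 0 < b <= 1) :
  let F := fun x => hypergeom a b (a + b) x in
  concave_on (fun x => / F x) 0 1 /\
  (forall x y, 0 < x < 1 -> 0 < y < 1 ->
     F ((x + y) / 2) <= 2 * F x * F y / (F x + F y) /\
     (F ((x + y) / 2) = 2 * F x * F y / (F x + F y) <-> x = y)).
Proof.
  intros F. set (c := hypergeom_coef a b (a + b)).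
  change F with (PSeries c); clear F.
  assert (c_0 : c 0%nat = 1) by apply hypergeom_coef_0.
  assert (c_pos : forall n, 0 < c n) by (intro n; apply hypergeom_coef_pos; lra).
  assert (c_le_1 : forall n, c n <= 1) by (intro n; now apply zero_balanced_coef_le_1).
  pose proof (fun n => zero_balanced_coef_log_convex a b n ha hb) as c_log_convex.
  pose proof (inv_PSeries_concave c c_0 c_pos c_le_1 c_log_convex) as Hconcave.
  split.
  - intros x y t Hx Hy Ht. apply Hconcave; lra.
  - intros x y Hx Hy.
    assert (Fpos : forall z, 0 <= z < 1 -> 0 < PSeries c z).
    { intros z Hz. pose proof (PSeries_ge_coef_0 c (fun n => Rlt_le _ _ (c_pos n)) c_le_1 z Hz).
      lra. }
    assert (Hmid : (/ PSeries c x + / PSeries c y) / 2 <= / PSeries c ((x + y) / 2)).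
    { replace ((x + y) / 2) with (/ 2 * x + (1 - / 2) * y) by field.
      pose proof (Hconcave x y (/ 2) ltac:(lra) ltac:(lra) ltac:(lra)). lra. }
    rewrite le_harmonic_mean_iff, eq_harmonic_mean_iff by (apply Fpos; lra).
    split; [exact Hmid | split].
    + intros Heq. destruct (Req_dec x y) as [|Hxy]; [assumption|].
      pose proof (inv_PSeries_midpoint_strict c c_0 c_pos c_le_1 c_log_convex x y
                    (zero_balanced_coef_1_sqr_lt a b ha hb) ltac:(lra) ltac:(lra) Hxy).
      lra.
    + intros <-. replace ((x + x) / 2) with x by field. field.
      apply Rgt_not_eq, Fpos; lra.
Qed.
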